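(* Let $\mathcal S$ be a subclass of a finite multi-algebra $\mathcal A=\mathcal A_1\times\cdots\times\mathcal A_m$ such that $\mathcal S=\mathcal S_1\times\cdots\times\mathcal S_m$. If for all distinct $i,j\in\{1,\dots,m\}$ and all $r\in\mathcal S_i$ we have $\Rsh_i^jr\in\mathcal S_j$, then $\mathcal S$ is $\Rsh$-closed.
   Context: A finite non-associative algebra is a tuple $(\mathcal A,\cup,\neg,\emptyset,\mathcal B,\diamond,\overline{\cdot},e)$ where $(\mathcal A,\cup,\neg,\emptyset,\mathcal B)$ is a finite Boolean algebra (with $x\cap y=\neg(\neg x\cup\neg y)$) and for all $x,y,z$: $\overline{\overline x}=x$, $\overline{x\cup y}=\overline x\cup\overline y$, $\overline{x\diamond y}=\overline y\diamond\overline x$, $e\diamond x=x\diamond e=x$, $x\diamond(y\cup z)=(x\diamond y)\cup(x\diamond z)$, $(x\diamond y)\cap\overline z=\emptyset\iff(y\diamond z)\cap\overline x=\emptyset$. A projection operator from $\mathcal A$ to $\mathcal A'$ is a map $\Rsh$ with $\Rsh(r\cup r')=\Rsh r\cup\Rsh r'$ and $\Rsh\overline r=\overline{\Rsh r}$. A finite multi-algebra is a product $\mathcal A_1\times\cdots\times\mathcal A_m$ of finite non-associative algebras with projection operators $\Rsh_i^j:\mathcal A_i\to\mathcal A_j$ for all distinct $i,j$; operations $\diamond,\cap,\overline{\cdot}$ on relations $R=(R_1,\dots,R_m)$ are componentwise. The projection closure $\Rsh R$ is obtained by repeatedly replacing $R_j$ by $R_j\cap\Rsh_i^jR_i$ (distinct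 $i,j$) until a fixed point. A subclass is a subset closed under $\diamond$, $\cap$ and converse; the $i$-th slice of $\mathcal S$ is $\mathcal S_i=\{R_i:R\in\mathcal S\}$; $\mathcal S$ is $\Rsh$-closed if $\Rsh R\in\mathcal S$ for all $R\in\mathcal S$. *)

From mathcomp Require Import all_boot.
Set Implicit Arguments. Unset Strict Implicit. Unset Printing Implicit Defensive.

Record NAlg := {
  car :> finType;
  cup : car -> car -> car;
  neg : car -> car;
  bot : car;
  top : car;
  dia : car -> car -> car;
  conv : car -> car;
  eid : car;
  (* derived intersection x ∩ y = ¬(¬x ∪ ¬y) is defined below *)
  cupC : forall x y, cup x y = cup y x;
  cupA : forall x y z, cup x (cup y z) = cup (cup x y) z;
  capC : forall x y, neg (cup (neg x) (neg y)) = neg (cup (neg y) (neg x));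
  capA : forall x y z,
    neg (cup (neg x) (neg (neg (cup (neg y) (neg z))))) =
    neg (cup (neg (neg (cup (neg x) (neg y)))) (neg z));
  cup_absorb : forall x y, cup x (neg (cup (neg x) (neg y))) = x;
  cap_absorb : forall x y, neg (cup (neg x) (neg (cup x y))) = x;
  cup_cap_distr : forall x y z,
    cup x (neg (cup (neg y) (neg z))) =
    neg (cup (neg (cup x y)) (neg (cup x z)));
  cup0 : forall x, cup x bot = x;
  capT : forall x, neg (cup (neg x) (neg top)) = x;
  cupN : forall x, cup x (neg x) = top;
  capN : forall x, neg (cup (neg x) (neg (neg x))) = bot;
  convK : forall x, conv (conv x) = x;
  conv_cup : forall x y, conv (cup x y) = cup (conv x) (conv y);
  conv_dia : forall x y, conv (dia x y) = dia (conv y) (conv x);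
  dia_e_l : forall x, dia eid x = x;
  dia_e_r : forall x, dia x eid = x;
  dia_cup : forall x y z, dia x (cup y z) = cup (dia x y) (dia x z);
  peircean : forall x y z,
    neg (cup (neg (dia x y)) (neg (conv z))) = bot <->
    neg (cup (neg (dia y z)) (neg (conv x))) = bot
}.

Definition cap (A : NAlg) (x y : A) : A := neg (cup (neg x) (neg y)).

Record MultiAlg (m : nat) := {
  alg : 'I_m -> NAlg;
  proj : forall i j : 'I_m, alg i -> alg j;
  proj_cup : forall (i j : 'I_m), i != j -> forall r r' : alg i,
    proj j (cup r r') = cup (proj j r) (proj j r');
  proj_conv : forall (i j : 'I_m), i != j -> forall r : alg i,
    proj j (conv r) = conv (proj j r)
}.

Section MA.
Variables (m : nat) (M : MultiAlg m).

Definition mrel := forall i : 'I_m, alg M i.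

Definition rdia (R S : mrel) : mrel := fun i => dia (R i) (S i).
Definition rcap (R S : mrel) : mrel := fun i => cap (R i) (S i).
Definition rconv (R : mrel) : mrel := fun i => conv (R i).

Definition proj_step (R R' : mrel) : Prop :=
  exists i j : 'I_m, i != j /\
    R' j = cap (R j) (@proj _ M i j (R i)) /\
    forall k : 'I_m, k != j -> R' k = R k.

Inductive proj_reach : mrel -> mrel -> Prop :=
  | proj_reach_refl R : proj_reach R R
  | proj_reach_step R R' R'' :
      proj_step R R' -> proj_reach R' R'' -> proj_reach R R''.

Definition proj_fixed (R : mrel) : Prop :=
  forall i j : 'I_m, i != j -> cap (R j) (@proj _ M i j (R i)) = R j.

Definition is_proj_closure (R R' : mrel) : Prop :=
  proj_reach R R' /\ proj_fixed R'.

Definition subclass (S : mrel -> Prop) : Prop :=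
  (forall R T, S R -> S T -> S (rdia R T)) /\
  (forall R T, S R -> S T -> S (rcap R T)) /\
  (forall R, S R -> S (rconv R)).

Definition slice (S : mrel -> Prop) (i : 'I_m) (r : alg M i) : Prop :=
  exists R, S R /\ R i = r.

Definition is_product (S : mrel -> Prop) : Prop :=
  forall R : mrel, S R <-> (forall i, slice S (R i)).

Definition proj_closed (S : mrel -> Prop) : Prop :=
  forall R R', S R -> is_proj_closure R R' -> S R'.

End MA.

From mathcomp Require Import all_boot.

Set Implicit Arguments.
Unset Strict Implicit.
Unset Printing Implicit Defensive.

(* Only closure under intersection is needed: a refinement step intersects a
   single component R_j with the projection of another component, and since S
   is a product of its slices it suffices that the new R_j lies in the slice
   S_j, which is closed under intersection and contains that projection. *)

Section ProjectionClosure.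
Variables (m : nat) (M : MultiAlg m) (S : mrel M -> Prop).

Lemma slice_self (R : mrel M) (i : 'I_m) : S R -> slice S (R i).
Proof. by move=> SR; exists R. Qed.

Lemma slice_cap (i : 'I_m) (r s : alg M i) :
  (forall R T, S R -> S T -> S (rcap R T)) ->
  slice S r -> slice S s -> slice S (cap r s).
Proof.
move=> capS [R [SR <-]] [T [ST <-]].
by exists (rcap R T); split; first exact: capS.
Qed.

Hypothesis capS : forall R T, S R -> S T -> S (rcap R T).
Hypothesis prodS : is_product S.
Hypothesis sliceS_proj : forall (i j : 'I_m), i != j -> forall r : alg M i,
  slice S r -> slice S (@proj _ M i j r).

Lemma proj_step_closed (R R' : mrel M) : S R -> proj_step R R' -> S R'.
Proof.
move=> SR [i [j [neq_ij [R'j R'k]]]]; apply/prodS => k.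
have [->|neq_kj] := eqVneq k j; last by rewrite R'k //; exact: slice_self.
rewrite R'j; apply: slice_cap => //; first exact: slice_self.
by apply: sliceS_proj => //; exact: slice_self.
Qed.

Lemma proj_reach_closed (R R' : mrel M) : S R -> proj_reach R R' -> S R'.
Proof.
by move=> SR reach; elim: reach SR => // R0 R1 R2 /proj_step_closed step _ IH /step.
Qed.

End ProjectionClosure.

Theorem proposition6p5 (m : nat) (M : MultiAlg m) (S : mrel M -> Prop) :
  subclass S -> is_product S ->
  (forall (i j : 'I_m), i != j -> forall r : alg M i,
     slice S r -> slice S (@proj _ M i j r)) ->
  proj_closed S.
Proof.
move=> [_ [capS _]] prodS sliceS_proj R R' SR [reach _].
exact: (proj_reach_closed capS prodS sliceS_proj SR reach).
Qed.
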